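(* Let $(B,\sqsubseteq)$ be a $\mathsf{DCPO}_\bot$-ordered functor with a cofree comonad such that $B$ preserves weak pullbacks, $\Sigma$ a functor with a free monad $(\Sigma^*,\eta,\mu)$, and $\rho\colon\Sigma B^\infty\Rightarrow B\Sigma^*$ a monotone biGSOS specification. For every $B$-coalgebra $c\colon X\to BX$, $\eta_X$ is a coalgebra homomorphism from $c$ to $c^\sharp$ and $\mu_X$ is a coalgebra homomorphism from $(c^\sharp)^\sharp$ to $c^\sharp$. Consequently $(\overline{\Sigma^*},\eta,\mu)$, where $\overline{\Sigma^*}(X,c)=(\Sigma^*X,c^\sharp)$ and $\overline{\Sigma^*}(h)=\Sigma^*h$, is a monad on $\mathsf{Coalg}(B)$ lifting the monad $(\Sigma^*,\eta,\mu)$ on $\mathsf{Set}$.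
   Context: An ordered functor $(B,\sqsubseteq)$ is a functor $B\colon\mathsf{Set}\to\mathsf{Set}$ together with a preorder $\sqsubseteq_{BX}$ on $BX$ for every set $X$, such that $Bf$ is monotone for every function $f$. It is $\mathsf{DCPO}_\bot$-ordered if moreover each $\sqsubseteq_{BX}$ is a partial order making $BX$ a pointed DCPO (least element and suprema of all directed subsets), and each $Bf$ is continuous, i.e. preserves suprema of all directed subsets including the empty one (hence preserves the least element). Relation lifting: for $R\subseteq X\times Y$ with projections $\pi_1,\pi_2$ and any functor $F$, $\mathsf{Rel}(F)(R)=\{(b,c)\in FX\times FY\mid\exists d\in FR.\ F\pi_1(d)=b,\ F\pi_2(d)=c\}$; $\mathsf{Rel}_{\sqsubseteq}(B)(R)=\{(b,c)\mid\exists b',c'.\ b\sqsubseteq b',\ (b',c')\in\mathsf{Rel}(B)(R),\ c'\sqsubseteq c\}$. For coalgebras $f\colon X\to BX$, $g\colon Y\to BY$, $R\subseteq X\times Y$ is a simulation if $(f(x),g(y))\in\mathsf{Rel}_{\sqsubseteq}(B)(R)$ for all $(x,y)\in R$; similarity is the greatest simulation. A coalgebra homomorphism from $c\colon X\to BX$ to $d\colon Y\to BY$ is $h\colon X\to Y$ with $Bh\circ c=d\circ h$; $\mathsf{Coalg}(B)$ is the category of $B$-coalgebras and homomorphisms. Cofree comonad: for each set $X$, $\theta_X\colon B^\infty X\to BB^\infty X$, $\epsilon_X\colon B^\infty X\to X$ with $\langle\theta_X,\epsilon_X\rangle$ a final $B(-)\times X$-coalgebra; for $f\colon X\to BX$,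 $f^\infty\colon X\to B^\infty X$ is the unique coalgebra morphism from $\langle f,\mathrm{id}_X\rangle$ to $\langle\theta_X,\epsilon_X\rangle$. The functor $B(-)\times X$ is ordered by $(b,x)\,\widetilde\sqsubseteq\,(c,y)$ iff $b\sqsubseteq c$ and $x=y$; $\lesssim_{B^\infty X}$ is the similarity of $\langle\theta_X,\epsilon_X\rangle$ with itself w.r.t. this order. Free monad: for each set $X$, $\iota_X\colon\Sigma\Sigma^*X\to\Sigma^*X$, $\eta_X\colon X\to\Sigma^*X$ with $[\iota_X,\eta_X]$ an initial algebra for $\Sigma(-)+X$; $\mu_X\colon\Sigma^*\Sigma^*X\to\Sigma^*X$ is the unique map with $\mu_X\circ\eta_{\Sigma^*X}=\mathrm{id}$ and $\mu_X\circ\iota_{\Sigma^*X}=\iota_X\circ\Sigma\mu_X$. A biGSOS specification is a natural transformation $\rho\colon\Sigma B^\infty\Rightarrow B\Sigma^*$; it is monotone if for every set $X$ and all $u,v\in\Sigma B^\infty X$ with $(u,v)\in\mathsf{Rel}(\Sigma)(\lesssim_{B^\infty X})$, $\rho_X(u)\sqsubseteq_{B\Sigma^*X}\rho_X(v)$. For $c\colon X\to BX$, $c^\sharp\colon\Sigma^*X\to B\Sigma^*X$ is the least fixed point (in the pointwise order) of the monotone map $\varphi_c(f)=[\,B\mu_X\circ\rho_{\Sigma^*X}\circ\Sigma f^\infty,\ B\eta_X\circ c\,]\circ[\iota_X,\eta_X]^{-1}$. A monad $(\overline T,\overline\eta,\overline\mu)$ on $\mathsf{Coalg}(B)$ lifts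 a monad $(T,\eta,\mu)$ on $\mathsf{Set}$ if $U\overline T=TU$, $U\overline\eta=\eta U$ and $U\overline\mu=\mu U$, with $U\colon\mathsf{Coalg}(B)\to\mathsf{Set}$ the forgetful functor. *)

(* Set-functors are modelled as functors on Coq's Type. *)
From Stdlib Require Import ClassicalEpsilon.

Record Functor := {
  fobj :> Type -> Type;
  fmap : forall X Y : Type, (X -> Y) -> fobj X -> fobj Y;
  fmap_id : forall X (u : fobj X), fmap X X (fun x => x) u = u;
  fmap_comp : forall X Y Z (f : X -> Y) (g : Y -> Z) (u : fobj X),
      fmap X Z (fun x => g (f x)) u = fmap Y Z g (fmap X Y f u)
}.
Arguments fmap {f} {X Y} _ _ : rename.

Definition RelT {X Y : Type} (R : X -> Y -> Prop) : Type :=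
  { p : X * Y | R (fst p) (snd p) }.
Definition rpi1 {X Y : Type} (R : X -> Y -> Prop) (p : RelT R) : X := fst (proj1_sig p).
Definition rpi2 {X Y : Type} (R : X -> Y -> Prop) (p : RelT R) : Y := snd (proj1_sig p).

Definition RelLift (F : Functor) {X Y : Type} (R : X -> Y -> Prop) (b : F X) (c : F Y) : Prop :=
  exists d : F (RelT R), fmap (rpi1 R) d = b /\ fmap (rpi2 R) d = c.

Record OrderedFunctor := {
  ofun :> Functor;
  ole : forall X : Type, ofun X -> ofun X -> Prop;
  ole_refl : forall X (a : ofun X), ole X a a;
  ole_trans : forall X (a b c : ofun X), ole X a b -> ole X b c -> ole X a c;
  fmap_mono : forall X Y (f : X -> Y) (a b : ofun X),
      ole X a b -> ole Y (fmap f a) (fmap f b)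
}.
Arguments ole {o} {X} _ _ : rename.

Definition RelLe (B : OrderedFunctor) {X Y : Type} (R : X -> Y -> Prop) (b : B X) (c : B Y) : Prop :=
  exists (b' : B X) (c' : B Y), ole b b' /\ RelLift B R b' c' /\ ole c' c.

Definition simulation (B : OrderedFunctor) {X Y : Type} (f : X -> B X) (g : Y -> B Y)
  (R : X -> Y -> Prop) : Prop :=
  forall x y, R x y -> RelLe B R (f x) (g y).

(* similarity = greatest simulation = union of all simulations *)
Definition similarity (B : OrderedFunctor) {X Y : Type} (f : X -> B X) (g : Y -> B Y)
  (x : X) (y : Y) : Prop :=
  exists R : X -> Y -> Prop, simulation B f g R /\ R x y.

(* Directed subsets: every pair has an upper bound in D (the empty set is directed). *)
Definition directed {A : Type} (le : A -> A -> Prop) (D : A -> Prop) : Prop :=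
  forall x y, D x -> D y -> exists z, D z /\ le x z /\ le y z.

Definition is_sup {A : Type} (le : A -> A -> Prop) (D : A -> Prop) (s : A) : Prop :=
  (forall x, D x -> le x s) /\ (forall u, (forall x, D x -> le x u) -> le s u).

Record DCPOFunctor := {
  dfun :> OrderedFunctor;
  dbot : forall X : Type, dfun X;
  dbot_least : forall X (a : dfun X), ole (dbot X) a;
  ole_antisym : forall X (a b : dfun X), ole a b -> ole b a -> a = b;
  dsup_exists : forall X (D : dfun X -> Prop),
      directed (@ole dfun X) D -> exists s, is_sup (@ole dfun X) D s;
  fmap_continuous : forall X Y (f : X -> Y) (D : dfun X -> Prop) (s : dfun X),
      directed (@ole dfun X) D -> is_sup (@ole dfun X) D s ->
      is_sup (@ole dfun Y) (fun b => exists a, D a /\ b = fmap f a) (fmap f s)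
}.

Definition preserves_weak_pullbacks (B : Functor) : Prop :=
  forall (X Y Z P : Type) (f : X -> Z) (g : Y -> Z) (p1 : P -> X) (p2 : P -> Y),
    (forall q, f (p1 q) = g (p2 q)) ->
    (forall x y, f x = g y -> exists q, p1 q = x /\ p2 q = y) ->
    forall (a : B X) (b : B Y), fmap f a = fmap g b ->
      exists w : B P, fmap p1 w = a /\ fmap p2 w = b.

(* ---------- Cofree comonad: final B(-) x X coalgebras ---------- *)
Record Cofree (B : Functor) := {
  Binf : Type -> Type;
  theta : forall X, Binf X -> B (Binf X);
  epsC : forall X, Binf X -> X;
  unfold : forall X Y : Type, (Y -> B Y * X) -> Y -> Binf X;
  unfold_theta : forall X Y (g : Y -> B Y * X) y,
      theta X (unfold X Y g y) = fmap (unfold X Y g) (fst (g y));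
  unfold_eps : forall X Y (g : Y -> B Y * X) y,
      epsC X (unfold X Y g y) = snd (g y);
  unfold_unique : forall X Y (g : Y -> B Y * X) (h : Y -> Binf X),
      (forall y, theta X (h y) = fmap h (fst (g y)) /\ epsC X (h y) = snd (g y)) ->
      forall y, h y = unfold X Y g y
}.
Arguments Binf {B} _ _.
Arguments theta {B} _ {X} _.
Arguments epsC {B} _ {X} _.
Arguments unfold {B} _ {X Y} _ _.

Definition finf {B : Functor} (C : Cofree B) {X : Type} (f : X -> B X) : X -> Binf C X :=
  unfold C (fun x => (f x, x)).

Definition Binf_map {B : Functor} (C : Cofree B) {X Y : Type} (f : X -> Y) : Binf C X -> Binf C Y :=
  unfold C (fun t => (theta C t, f (epsC C t))).

(* ---------- Free monad: initial Sigma(-) + X algebras ---------- *)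
Record FreeMonad (S : Functor) := {
  Sstar : Type -> Type;
  iota : forall X, S (Sstar X) -> Sstar X;
  eta : forall X, X -> Sstar X;
  fold : forall X A : Type, (S A -> A) -> (X -> A) -> Sstar X -> A;
  fold_iota : forall X A (a : S A -> A) (e : X -> A) s,
      fold X A a e (iota X s) = a (fmap (fold X A a e) s);
  fold_eta : forall X A (a : S A -> A) (e : X -> A) x,
      fold X A a e (eta X x) = e x;
  fold_unique : forall X A (a : S A -> A) (e : X -> A) (h : Sstar X -> A),
      (forall s, h (iota X s) = a (fmap h s)) -> (forall x, h (eta X x) = e x) ->
      forall t, h t = fold X A a e t
}.
Arguments Sstar {S} _ _.
Arguments iota {S} _ {X} _.
Arguments eta {S} _ {X} _.
Arguments fold {S} _ {X A} _ _ _.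

Definition mu {S : Functor} (M : FreeMonad S) {X : Type} : Sstar M (Sstar M X) -> Sstar M X :=
  fold M (iota M) (fun t => t).

Definition Smap {S : Functor} (M : FreeMonad S) {X Y : Type} (f : X -> Y) : Sstar M X -> Sstar M Y :=
  fold M (iota M) (fun x => eta M (f x)).

(* [iota, eta] and its inverse (Lambek) *)
Definition iota_eta {S : Functor} (M : FreeMonad S) {X : Type}
  (u : S (Sstar M X) + X) : Sstar M X :=
  match u with inl s => iota M s | inr x => eta M x end.

Definition unroll {S : Functor} (M : FreeMonad S) {X : Type} : Sstar M X -> S (Sstar M X) + X :=
  fold M (fun s => inl (fmap (iota_eta M) s)) inr.

Definition prodF (B : Functor) (X : Type) : Functor.
Proof.
  refine {| fobj := fun Y => (B Y * X)%type;
            fmap := fun Y Z (f : Y -> Z) p => (fmap f (fst p), snd p) |}.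
  - intros Y [b x]; simpl; rewrite fmap_id; reflexivity.
  - intros Y Z W f g [b x]; simpl; rewrite fmap_comp; reflexivity.
Defined.

Definition prodOF (B : OrderedFunctor) (X : Type) : OrderedFunctor.
Proof.
  refine {| ofun := prodF B X;
            ole := fun Y (p q : B Y * X) => ole (fst p) (fst q) /\ snd p = snd q |}.
  - intros Y p; split; [apply ole_refl | reflexivity].
  - intros Y p q r [H1 H2] [H3 H4]; split; [eapply ole_trans; eauto | congruence].
  - intros Y Z f p q [H1 H2]; simpl; split; [apply fmap_mono; exact H1 | exact H2].
Defined.

Definition lesssim (B : OrderedFunctor) (C : Cofree B) (X : Type) : Binf C X -> Binf C X -> Prop :=
  @similarity (prodOF B X) (Binf C X) (Binf C X)
    (fun t => (theta C t, epsC C t)) (fun t => (theta C t, epsC C t)).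

Definition biGSOS_natural {B S : Functor} (C : Cofree B) (M : FreeMonad S)
  (rho : forall X, S (Binf C X) -> B (Sstar M X)) : Prop :=
  forall X Y (f : X -> Y) (u : S (Binf C X)),
    rho Y (fmap (Binf_map C f) u) = fmap (Smap M f) (rho X u).

Definition biGSOS_monotone {B : OrderedFunctor} {S : Functor} (C : Cofree B) (M : FreeMonad S)
  (rho : forall X, S (Binf C X) -> B (Sstar M X)) : Prop :=
  forall X (u v : S (Binf C X)),
    RelLift S (lesssim B C X) u v -> ole (rho X u) (rho X v).

Definition phi {B S : Functor} (C : Cofree B) (M : FreeMonad S)
  (rho : forall X, S (Binf C X) -> B (Sstar M X)) {X : Type} (c : X -> B X)
  (f : Sstar M X -> B (Sstar M X)) : Sstar M X -> B (Sstar M X) :=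
  fun t => match unroll M t with
           | inl s => fmap (mu M) (rho (Sstar M X) (fmap (finf C f) s))
           | inr x => fmap (eta M) (c x)
           end.

Definition is_lfp {B : OrderedFunctor} {S : Functor} (C : Cofree B) (M : FreeMonad S)
  (rho : forall X, S (Binf C X) -> B (Sstar M X)) {X : Type} (c : X -> B X)
  (f : Sstar M X -> B (Sstar M X)) : Prop :=
  (forall t, phi C M rho c f t = f t) /\
  (forall g, (forall t, phi C M rho c g t = g t) -> forall t, ole (f t) (g t)).

Definition sharp {B : DCPOFunctor} {S : Functor} (C : Cofree B) (M : FreeMonad S)
  (rho : forall X, S (Binf C X) -> B (Sstar M X)) {X : Type} (c : X -> B X) :
  Sstar M X -> B (Sstar M X) :=
  epsilon (inhabits (fun _ => dbot B (Sstar M X))) (is_lfp C M rho c).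

Definition coalg_hom (B : Functor) {X Y : Type} (c : X -> B X) (d : Y -> B Y) (h : X -> Y) : Prop :=
  forall x, fmap h (c x) = d (h x).

(* (Sigma^*-bar, eta, mu) is a monad on Coalg(B) lifting (Sigma^*, eta, mu):
   Sigma^*-bar is a functor on Coalg(B) (well-defined on morphisms, functor laws),
   eta and mu have coalgebra-homomorphism components, they are natural,
   and the monad laws hold (U is faithful, so all these are checked in Set). *)
Definition lifted_monad (B : DCPOFunctor) {S : Functor} (C : Cofree B) (M : FreeMonad S)
  (rho : forall X, S (Binf C X) -> B (Sstar M X)) : Prop :=
  (forall X Y (c : X -> B X) (d : Y -> B Y) (h : X -> Y),
      coalg_hom B c d h -> coalg_hom B (sharp C M rho c) (sharp C M rho d) (Smap M h)) /\
  (forall X (t : Sstar M X), Smap M (fun x => x) t = t) /\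
  (forall X Y Z (f : X -> Y) (g : Y -> Z) (t : Sstar M X),
      Smap M (fun x => g (f x)) t = Smap M g (Smap M f t)) /\
  (forall X (c : X -> B X), coalg_hom B c (sharp C M rho c) (eta M)) /\
  (forall X (c : X -> B X),
      coalg_hom B (sharp C M rho (sharp C M rho c)) (sharp C M rho c) (mu M)) /\
  (forall X Y (f : X -> Y) (x : X), Smap M f (eta M x) = eta M (f x)) /\
  (forall X Y (f : X -> Y) (t : Sstar M (Sstar M X)),
      Smap M f (mu M t) = mu M (Smap M (Smap M f) t)) /\
  (forall X (t : Sstar M X), mu M (eta M t) = t) /\
  (forall X (t : Sstar M X), mu M (Smap M (eta M) t) = t) /\
  (forall X (t : Sstar M (Sstar M (Sstar M X))), mu M (mu M t) = mu M (Smap M (mu M) t)).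

From Stdlib Require Import ClassicalEpsilon FunctionalExtensionality.

(* Since phi_c is monotone on the pointed DCPO of maps Sigma^*X -> B Sigma^*X, Pataraia's
   theorem gives c^sharp as its least fixed point, and properties of c^sharp can be proved by
   fixed-point induction over admissible predicates.  Let h : Sigma^*X -> Sigma^*Y commute
   with iota and mu.  Then B h o c^sharp <= d^sharp o h and d^sharp o h <= B h o c^sharp
   follow by induction on c^sharp and on d^sharp respectively: on generators they are
   assumptions, and on iota-terms naturality of rho reduces them to comparing rho at
   arguments related by similarity, because a lax coalgebra morphism between two
   coalgebras induces a simulation between their unfoldings into B^infty.  Both Sigma^* k,
   for a homomorphism k, and mu commute with iota and mu, which gives functoriality and
   the multiplication; the unit and the monad laws are those of Sigma^* in Set. *)

Lemma fmap_ext (F : Functor) {X Y : Type} (f g : X -> Y) :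
  (forall x, f x = g x) -> forall u : F X, fmap f u = fmap g u.
Proof. intros Hfg u. now rewrite (functional_extensionality f g Hfg). Qed.

Section FreeMonadLaws.
Context {S : Functor} (M : FreeMonad S).

Lemma free_hom_ext {X A : Type} (a : S A -> A) (h1 h2 : Sstar M X -> A) :
  (forall s, h1 (iota M s) = a (fmap h1 s)) ->
  (forall s, h2 (iota M s) = a (fmap h2 s)) ->
  (forall x, h1 (eta M x) = h2 (eta M x)) ->
  forall t, h1 t = h2 t.
Proof.
  intros H1 H2 He t.
  rewrite (fold_unique _ M X A a (fun x => h2 (eta M x)) h1 H1 He t).
  symmetry. exact (fold_unique _ M X A a _ h2 H2 (fun _ => eq_refl) t).
Qed.

Lemma mu_eta {X : Type} (t : Sstar M X) : mu M (eta M t) = t.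
Proof. apply fold_eta. Qed.

Lemma mu_iota {X : Type} (s : S (Sstar M (Sstar M X))) :
  mu M (iota M s) = iota M (fmap (mu M) s).
Proof. apply fold_iota. Qed.

Lemma Smap_eta {X Y : Type} (f : X -> Y) (x : X) : Smap M f (eta M x) = eta M (f x).
Proof. apply fold_eta. Qed.

Lemma Smap_iota {X Y : Type} (f : X -> Y) (s : S (Sstar M X)) :
  Smap M f (iota M s) = iota M (fmap (Smap M f) s).
Proof. apply fold_iota. Qed.

Lemma iota_fmap_id {X : Type} (s : S (Sstar M X)) : iota M s = iota M (fmap (fun t => t) s).
Proof. now rewrite fmap_id. Qed.

Lemma Smap_id {X : Type} (t : Sstar M X) : Smap M (fun x => x) t = t.
Proof.
  apply (free_hom_ext (iota M) _ (fun t => t)); [apply Smap_iota | apply iota_fmap_id |].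
  intro x. apply Smap_eta.
Qed.

Lemma Smap_comp {X Y Z : Type} (f : X -> Y) (g : Y -> Z) (t : Sstar M X) :
  Smap M (fun x => g (f x)) t = Smap M g (Smap M f t).
Proof.
  apply (free_hom_ext (iota M) _ (fun t => Smap M g (Smap M f t))); [apply Smap_iota | |].
  - intro s. now rewrite !Smap_iota, <- fmap_comp.
  - intro x. now rewrite !Smap_eta.
Qed.

Lemma mu_Smap_eta {X : Type} (t : Sstar M X) : mu M (Smap M (eta M) t) = t.
Proof.
  apply (free_hom_ext (iota M) (fun t => mu M (Smap M (eta M) t)) (fun t => t));
    [| apply iota_fmap_id |].
  - intro s. now rewrite Smap_iota, mu_iota, <- fmap_comp.
  - intro x. now rewrite Smap_eta, mu_eta.
Qed.

Lemma Smap_mu {X Y : Type} (f : X -> Y) (t : Sstar M (Sstar M X)) :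
  Smap M f (mu M t) = mu M (Smap M (Smap M f) t).
Proof.
  apply (free_hom_ext (iota M) (fun t => Smap M f (mu M t)) (fun t => mu M (Smap M (Smap M f) t))).
  - intro s. now rewrite mu_iota, Smap_iota, <- fmap_comp.
  - intro s. now rewrite Smap_iota, mu_iota, <- fmap_comp.
  - intro x. now rewrite Smap_eta, !mu_eta.
Qed.

Lemma mu_mu {X : Type} (t : Sstar M (Sstar M (Sstar M X))) :
  mu M (mu M t) = mu M (Smap M (mu M) t).
Proof.
  apply (free_hom_ext (iota M) (fun t => mu M (mu M t)) (fun t => mu M (Smap M (mu M) t))).
  - intro s. now rewrite !mu_iota, <- fmap_comp.
  - intro s. now rewrite Smap_iota, mu_iota, <- fmap_comp.
  - intro x. now rewrite Smap_eta, !mu_eta.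
Qed.

Lemma unroll_eta {X : Type} (x : X) : unroll M (eta M x) = inr x.
Proof. apply fold_eta. Qed.

Lemma iota_eta_unroll {X : Type} (t : Sstar M X) : iota_eta M (unroll M t) = t.
Proof.
  apply (free_hom_ext (iota M) (fun t => iota_eta M (unroll M t)) (fun t => t));
    [| apply iota_fmap_id |].
  - intro s. unfold unroll at 1. now rewrite fold_iota, <- fmap_comp.
  - intro x. now rewrite unroll_eta.
Qed.

Lemma unroll_iota {X : Type} (s : S (Sstar M X)) : unroll M (iota M s) = inl s.
Proof.
  unfold unroll at 1. rewrite fold_iota, <- fmap_comp.
  now rewrite (fmap_ext S _ (fun t => t) (@iota_eta_unroll X)), fmap_id.
Qed.

Lemma Sstar_case {X : Type} (P : Sstar M X -> Prop) :
  (forall x, P (eta M x)) -> (forall s, P (iota M s)) -> forall t, P t.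
Proof.
  intros He Hi t. rewrite <- (iota_eta_unroll t). destruct (unroll M t); simpl; auto.
Qed.

End FreeMonadLaws.

Section CofreeLaws.
Context {B : Functor} (C : Cofree B).

Lemma theta_finf {X : Type} (f : X -> B X) (x : X) :
  theta C (finf C f x) = fmap (finf C f) (f x).
Proof. apply unfold_theta. Qed.

Lemma eps_finf {X : Type} (f : X -> B X) (x : X) : epsC C (finf C f x) = x.
Proof. apply unfold_eps. Qed.

Lemma theta_Binf_map {X Y : Type} (f : X -> Y) (t : Binf C X) :
  theta C (Binf_map C f t) = fmap (Binf_map C f) (theta C t).
Proof. apply unfold_theta. Qed.

Lemma eps_Binf_map {X Y : Type} (f : X -> Y) (t : Binf C X) :
  epsC C (Binf_map C f t) = f (epsC C t).
Proof. apply unfold_eps. Qed.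

End CofreeLaws.

Lemma rellift_fmap (F : Functor) {X Y Z : Type} (R : X -> Y -> Prop)
  (al : Z -> X) (be : Z -> Y) :
  (forall z, R (al z) (be z)) -> forall u : F Z, RelLift F R (fmap al u) (fmap be u).
Proof.
  intros HR u.
  exists (fmap (fun z => exist (fun p : X * Y => R (fst p) (snd p)) (al z, be z) (HR z)) u).
  split; now rewrite <- fmap_comp.
Qed.

Section Similarity.
Context {B : OrderedFunctor} (C : Cofree B).

Lemma lesssim_of_step {X Z : Type} (al be : Z -> Binf C X) :
  (forall z, exists u : B Z, ole (theta C (al z)) (fmap al u) /\
     ole (fmap be u) (theta C (be z)) /\ epsC C (al z) = epsC C (be z)) ->
  forall z, lesssim B C X (al z) (be z).
Proof.
  intros Hstep z0.
  set (R := fun a b : Binf C X => exists z, a = al z /\ b = be z).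
  exists R. split; [| now exists z0].
  intros a b [z [-> ->]]. destruct (Hstep z) as [u [Hal [Hbe Heps]]].
  set (w := fun z' => exist (fun p : Binf C X * Binf C X => R (fst p) (snd p))
              (al z', be z') (ex_intro _ z' (conj eq_refl eq_refl))).
  exists (fmap al u, epsC C (al z)), (fmap be u, epsC C (be z)).
  split; [| split].
  - now split.
  - exists (fmap w u, epsC C (al z)). simpl.
    rewrite Heps, <- !fmap_comp. now split.
  - now split.
Qed.

Lemma finf_lesssim {X : Type} (f g : X -> B X) :
  (forall x, ole (f x) (g x)) -> forall x, lesssim B C X (finf C f x) (finf C g x).
Proof.
  intro Hfg. apply lesssim_of_step. intro x. exists (g x).
  rewrite !theta_finf, !eps_finf.
  split; [now apply fmap_mono | split; [apply ole_refl | reflexivity]].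
Qed.

Lemma lax_hom_lesssim {X Y : Type} (f : X -> B X) (g : Y -> B Y) (h : X -> Y) :
  (forall x, ole (fmap h (f x)) (g (h x))) ->
  forall x, lesssim B C Y (Binf_map C h (finf C f x)) (finf C g (h x)).
Proof.
  intro Hh. apply (lesssim_of_step (fun x => Binf_map C h (finf C f x))).
  intro x. exists (f x).
  rewrite theta_Binf_map, eps_Binf_map, !theta_finf, !eps_finf, <- !fmap_comp.
  split; [apply ole_refl | split; [| reflexivity]].
  rewrite (fmap_comp _ _ _ _ h (finf C g)). now apply fmap_mono.
Qed.

Lemma oplax_hom_lesssim {X Y : Type} (f : X -> B X) (g : Y -> B Y) (h : X -> Y) :
  (forall x, ole (g (h x)) (fmap h (f x))) ->
  forall x, lesssim B C Y (finf C g (h x)) (Binf_map C h (finf C f x)).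
Proof.
  intro Hh. apply (lesssim_of_step (fun x => finf C g (h x))).
  intro x. exists (f x).
  rewrite theta_Binf_map, eps_Binf_map, !theta_finf, !eps_finf, <- !fmap_comp.
  split; [| split; [apply ole_refl | reflexivity]].
  rewrite (fmap_comp _ _ _ _ h (finf C g)). now apply fmap_mono.
Qed.

End Similarity.

Section LeastFixpoint.
Context {A : Type} (le : A -> A -> Prop).
Hypothesis le_refl : forall a, le a a.
Hypothesis le_trans : forall a b c, le a b -> le b c -> le a c.
Variable F : A -> A.
Hypothesis F_mono : forall a b, le a b -> le (F a) (F b).

Lemma pataraia (G : A -> Prop) (a0 : A) :
  G a0 -> (forall a, G a -> G (F a)) -> (forall a, G a -> le a (F a)) ->
  (forall D, directed le D -> (forall a, D a -> G a) -> exists s, is_sup le D s /\ G s) ->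
  exists p, G p /\ le (F p) p.
Proof.
  intros Ga0 G_F F_infl G_sup.
  (* The monotone inflationary self-maps of G form a set directed under composition;
     its pointwise supremum [top] is again such a map, so it absorbs [F]. *)
  set (infl := fun g : A -> A => (forall x, G x -> G (g x)) /\ (forall x, G x -> le x (g x))
         /\ (forall x y, G x -> G y -> le x y -> le (g x) (g y))).
  set (orbit := fun x b => exists g, infl g /\ b = g x).
  assert (orbit_sup : forall x, G x -> exists s, is_sup le (orbit x) s /\ G s).
  { intros x Gx. apply G_sup.
    - intros b1 b2 [g1 [[G1 [I1 M1]] ->]] [g2 [[G2 [I2 M2]] ->]].
      exists (g1 (g2 x)). split; [| split; auto].
      exists (fun y => g1 (g2 y)). split; [| reflexivity].
      split; [| split]; auto. intros y Gy. apply (le_trans _ (g2 y)); auto.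
    - intros b [g [[Gg _] ->]]. auto. }
  set (top := fun x => epsilon (inhabits x) (fun s => G x -> is_sup le (orbit x) s /\ G s)).
  assert (top_sup : forall x, G x -> is_sup le (orbit x) (top x) /\ G (top x)).
  { intros x Gx.
    apply (epsilon_spec (inhabits x) (fun s => G x -> is_sup le (orbit x) s /\ G s)); [| exact Gx].
    destruct (orbit_sup x Gx) as [s Hs]. now exists s. }
  assert (top_infl : infl top).
  { split; [| split].
    - intros x Gx. apply top_sup, Gx.
    - intros x Gx. apply (top_sup x Gx). exists (fun y => y).
      split; [split; [| split] |]; auto.
    - intros x y Gx Gy Hxy. apply (top_sup x Gx).
      intros b [g [[Gg [Ig Mg]] ->]]. apply (le_trans _ (g y)); [now apply Mg |].
      apply (top_sup y Gy). exists g. split; [split; auto | reflexivity]. }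
  exists (top a0). split; [apply (top_sup a0 Ga0) |].
  apply (top_sup a0 Ga0). exists (fun x => F (top x)). split; [| reflexivity].
  destruct top_infl as [Gt [It Mt]].
  split; [| split]; auto. intros x Gx. apply (le_trans _ (top x)); auto.
Qed.

Variable bot : A.
Hypothesis bot_least : forall a, le bot a.
Hypothesis sup_exists : forall D, directed le D -> exists s, is_sup le D s.

Definition admissible (Q : A -> Prop) : Prop :=
  Q bot /\ forall D s, directed le D -> (forall a, D a -> Q a) -> is_sup le D s -> Q s.

Lemma least_prefixed_point_ind (Q : A -> Prop) :
  admissible Q ->
  (forall a, Q a -> (forall q, le (F q) q -> le a q) -> Q (F a)) ->
  exists p, le (F p) p /\ le p (F p) /\ (forall q, le (F q) q -> le p q) /\ Q p.
Proof.
  intros [Qbot Qsup] Qstep.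
  destruct (pataraia (fun a => le a (F a) /\ (forall q, le (F q) q -> le a q) /\ Q a) bot)
    as [p [[Hinfl [Hleast HQ]] Hpre]].
  - auto.
  - intros a [Ha [Hl HQa]]. split; [| split]; auto.
    intros q Hq. apply (le_trans _ (F q)); auto.
  - tauto.
  - intros D HD HG. destruct (sup_exists D HD) as [s [Hub Hlub]].
    exists s. split; [now split |]. split; [| split].
    + apply Hlub. intros a Da. apply (le_trans _ (F a)); [exact (proj1 (HG a Da)) |].
      apply F_mono; apply Hub; exact Da.
    + intros q Hq. apply Hlub. intros a Da. now apply HG.
    + apply (Qsup D s HD); [intros a Da; apply (HG a Da) | now split].
  - now exists p.
Qed.

End LeastFixpoint.

Section Pointwise.
Context {B : DCPOFunctor}.

Definition le_fun {W V : Type} (f g : W -> B V) : Prop := forall t, ole (f t) (g t).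

Definition values_at {W V : Type} (D : (W -> B V) -> Prop) (t : W) (b : B V) : Prop :=
  exists f, D f /\ b = f t.

Definition scott_continuous {X V : Type} (L : B X -> B V) : Prop :=
  forall D s, directed ole D -> is_sup ole D s ->
    is_sup ole (fun b => exists a, D a /\ b = L a) (L s).

Lemma id_continuous {X : Type} : scott_continuous (fun b : B X => b).
Proof.
  intros D s _ [Hub Hlub]. split.
  - intros b [a [Da ->]]. now apply Hub.
  - intros u Hu. apply Hlub. intros a Da. apply Hu. now exists a.
Qed.

Lemma directed_values_at {W V : Type} (D : (W -> B V) -> Prop) :
  directed le_fun D -> forall t, directed ole (values_at D t).
Proof.
  intros HD t b1 b2 [f [Df ->]] [g [Dg ->]].
  destruct (HD f g Df Dg) as [k [Dk [Hf Hg]]].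
  exists (k t). split; [now exists k | split; auto].
Qed.

Lemma pointwise_sup {W V : Type} (D : (W -> B V) -> Prop) :
  directed le_fun D ->
  exists s, is_sup le_fun D s /\ forall t, is_sup ole (values_at D t) (s t).
Proof.
  intro HD.
  set (s := fun t => epsilon (inhabits (dbot B V)) (is_sup ole (values_at D t))).
  assert (Hs : forall t, is_sup ole (values_at D t) (s t)).
  { intro t. apply epsilon_spec, dsup_exists, directed_values_at, HD. }
  exists s. split; [split | exact Hs].
  - intros f Df t. apply (Hs t). now exists f.
  - intros u Hu t. apply (Hs t). intros b [f [Df ->]]. now apply Hu.
Qed.

Lemma sup_values_at {W V : Type} (D : (W -> B V) -> Prop) (s : W -> B V) :
  directed le_fun D -> is_sup le_fun D s -> forall t, is_sup ole (values_at D t) (s t).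
Proof.
  intros HD [Hub Hlub] t. destruct (pointwise_sup D HD) as [s0 [[Hub0 _] Hs0]]. split.
  - intros b [f [Df ->]]. now apply Hub.
  - intros u Hu. eapply ole_trans; [exact (Hlub s0 Hub0 t) | now apply Hs0].
Qed.

Lemma admissible_le_image {W X V T : Type} (L : B X -> B V) (m : T -> W) (R : T -> B V) :
  scott_continuous L ->
  admissible le_fun (fun _ => dbot B X) (fun f : W -> B X => forall t, ole (L (f (m t))) (R t)).
Proof.
  intro HL. split.
  - intro t. refine (proj2 (HL (fun _ => False) (dbot B X) _ _) (R t) _).
    + intros a b [].
    + split; [intros a [] | intros; apply dbot_least].
    + intros b [a [[] _]].
  - intros D s HD HQ Hs t.
    apply (HL _ _ (directed_values_at D HD (m t)) (sup_values_at D s HD Hs (m t))).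
    intros b [a [[f [Df ->]] ->]]. now apply HQ.
Qed.

End Pointwise.

Section Sharp.
Context {B : DCPOFunctor} (C : Cofree B) {S : Functor} (M : FreeMonad S)
  (rho : forall X, S (Binf C X) -> B (Sstar M X)).
Hypothesis rho_mono : biGSOS_monotone C M rho.

Lemma phi_eta {X : Type} (c : X -> B X) (f : Sstar M X -> B (Sstar M X)) (x : X) :
  phi C M rho c f (eta M x) = fmap (eta M) (c x).
Proof. unfold phi. now rewrite unroll_eta. Qed.

Lemma phi_iota {X : Type} (c : X -> B X) (f : Sstar M X -> B (Sstar M X))
  (s : S (Sstar M X)) :
  phi C M rho c f (iota M s) = fmap (mu M) (rho _ (fmap (finf C f) s)).
Proof. unfold phi. now rewrite unroll_iota. Qed.

Lemma rho_lesssim_mono {X Z : Type} (al be : Z -> Binf C (Sstar M X)) :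
  (forall z, lesssim B C _ (al z) (be z)) ->
  forall s, ole (fmap (mu M) (rho _ (fmap al s))) (fmap (mu M) (rho _ (fmap be s))).
Proof. intros Hsim s. now apply fmap_mono, rho_mono, rellift_fmap. Qed.

Lemma phi_mono {X : Type} (c : X -> B X) (f g : Sstar M X -> B (Sstar M X)) :
  le_fun f g -> le_fun (phi C M rho c f) (phi C M rho c g).
Proof.
  intros Hfg t. unfold phi. destruct (unroll M t) as [s | x].
  - now apply rho_lesssim_mono, finf_lesssim.
  - apply ole_refl.
Qed.

Lemma lfp_unique {X : Type} (c : X -> B X) (f g : Sstar M X -> B (Sstar M X)) :
  is_lfp C M rho c f -> is_lfp C M rho c g -> f = g.
Proof.
  intros [Ff Lf] [Fg Lg]. apply functional_extensionality. intro t.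
  apply ole_antisym; [now apply Lf | now apply Lg].
Qed.

Lemma phi_lfp_ind {X : Type} (c : X -> B X) (Q : (Sstar M X -> B (Sstar M X)) -> Prop) :
  admissible le_fun (fun _ => dbot B _) Q ->
  (forall f, Q f -> (forall g, le_fun (phi C M rho c g) g -> le_fun f g) ->
     Q (phi C M rho c f)) ->
  exists p, is_lfp C M rho c p /\ Q p.
Proof.
  intros Qadm Qstep.
  destruct (least_prefixed_point_ind le_fun
              (fun f t => ole_refl _ _ (f t))
              (fun f g k Hfg Hgk t => ole_trans _ _ _ _ _ (Hfg t) (Hgk t))
              (phi C M rho c) (phi_mono c)
              (fun _ => dbot B _) (fun f t => dbot_least _ _ (f t))
              (fun D HD => let (s, Hs) := pointwise_sup D HD in ex_intro _ s (proj1 Hs))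
              Q Qadm Qstep) as [p [Hpre [Hpost [Hleast HQ]]]].
  exists p. split; [split | exact HQ].
  - intro t. now apply ole_antisym.
  - intros g Hg. apply Hleast. intro t. rewrite Hg. apply ole_refl.
Qed.

Lemma sharp_lfp {X : Type} (c : X -> B X) : is_lfp C M rho c (sharp C M rho c).
Proof.
  unfold sharp. apply epsilon_spec.
  destruct (phi_lfp_ind c (fun _ => True)) as [p [Hp _]]; [now split | auto | now exists p].
Qed.

Lemma sharp_fix {X : Type} (c : X -> B X) (t : Sstar M X) :
  phi C M rho c (sharp C M rho c) t = sharp C M rho c t.
Proof. apply sharp_lfp. Qed.

Lemma sharp_ind {X : Type} (c : X -> B X) (Q : (Sstar M X -> B (Sstar M X)) -> Prop) :
  admissible le_fun (fun _ => dbot B _) Q ->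
  (forall f, Q f -> le_fun f (sharp C M rho c) -> Q (phi C M rho c f)) ->
  Q (sharp C M rho c).
Proof.
  intros Qadm Qstep.
  destruct (phi_lfp_ind c Q Qadm) as [p [Hp HQ]].
  - intros f Hf Hleast. apply (Qstep f Hf), Hleast.
    intro t. rewrite sharp_fix. apply ole_refl.
  - now rewrite (lfp_unique c _ _ (sharp_lfp c) Hp).
Qed.

Lemma eta_hom {X : Type} (c : X -> B X) : coalg_hom B c (sharp C M rho c) (eta M).
Proof. intro x. now rewrite <- sharp_fix, phi_eta. Qed.

Hypothesis rho_natural : biGSOS_natural C M rho.

Section FreeAlgebraMorphism.
Context {X Y : Type} (c : X -> B X) (d : Y -> B Y) (h : Sstar M X -> Sstar M Y).
Hypothesis h_iota : forall s, h (iota M s) = iota M (fmap h s).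
Hypothesis h_mu : forall t, h (mu M t) = mu M (Smap M h t).

Lemma fmap_phi_iota (f : Sstar M X -> B (Sstar M X)) (s : S (Sstar M X)) :
  fmap h (phi C M rho c f (iota M s)) =
  fmap (mu M) (rho _ (fmap (fun z => Binf_map C h (finf C f z)) s)).
Proof.
  rewrite phi_iota, <- fmap_comp, (fmap_ext _ _ _ h_mu), fmap_comp,
    <- rho_natural, <- fmap_comp.
  reflexivity.
Qed.

Lemma phi_h_iota (g : Sstar M Y -> B (Sstar M Y)) (s : S (Sstar M X)) :
  phi C M rho d g (h (iota M s)) =
  fmap (mu M) (rho _ (fmap (fun z => finf C g (h z)) s)).
Proof. now rewrite h_iota, phi_iota, <- fmap_comp. Qed.

Lemma sharp_lax_hom :
  (forall x, ole (fmap h (sharp C M rho c (eta M x))) (sharp C M rho d (h (eta M x)))) ->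
  forall t, ole (fmap h (sharp C M rho c t)) (sharp C M rho d (h t)).
Proof.
  intro Heta.
  apply (sharp_ind c (fun f => forall t, ole (fmap h (f t)) (sharp C M rho d (h t)))).
  { exact (admissible_le_image (fmap h) (fun t => t) (fun t => sharp C M rho d (h t))
             (fmap_continuous B _ _ h)). }
  intros f IH _. apply Sstar_case.
  - intro x. rewrite phi_eta, <- (phi_eta c (sharp C M rho c)), sharp_fix. apply Heta.
  - intro s. rewrite fmap_phi_iota, <- sharp_fix, phi_h_iota.
    now apply rho_lesssim_mono, lax_hom_lesssim.
Qed.

Lemma sharp_oplax_hom :
  (forall x, ole (sharp C M rho d (h (eta M x))) (fmap h (sharp C M rho c (eta M x)))) ->
  forall t, ole (sharp C M rho d (h t)) (fmap h (sharp C M rho c t)).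
Proof.
  intro Heta.
  apply (sharp_ind d (fun g => forall t, ole (g (h t)) (fmap h (sharp C M rho c t)))).
  { exact (admissible_le_image (fun b => b) h (fun t => fmap h (sharp C M rho c t))
             id_continuous). }
  intros g IH Hg. apply Sstar_case.
  - intro x. eapply ole_trans; [apply (phi_mono d g _ Hg) |].
    rewrite sharp_fix. apply Heta.
  - intro s. rewrite phi_h_iota, <- (sharp_fix c (iota M s)), fmap_phi_iota.
    now apply rho_lesssim_mono, oplax_hom_lesssim.
Qed.

Lemma sharp_hom :
  (forall x, fmap h (sharp C M rho c (eta M x)) = sharp C M rho d (h (eta M x))) ->
  coalg_hom B (sharp C M rho c) (sharp C M rho d) h.
Proof.
  intros Heta t. apply ole_antisym.
  - apply sharp_lax_hom. intro x. rewrite Heta. apply ole_refl.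
  - apply sharp_oplax_hom. intro x. rewrite Heta. apply ole_refl.
Qed.

End FreeAlgebraMorphism.

Lemma Smap_hom {X Y : Type} (c : X -> B X) (d : Y -> B Y) (k : X -> Y) :
  coalg_hom B c d k -> coalg_hom B (sharp C M rho c) (sharp C M rho d) (Smap M k).
Proof.
  intro Hk. apply sharp_hom; [apply Smap_iota | apply Smap_mu |].
  intro x. rewrite Smap_eta, <- !eta_hom, <- Hk, <- !fmap_comp.
  apply fmap_ext. intro y. apply Smap_eta.
Qed.

Lemma mu_hom {X : Type} (c : X -> B X) :
  coalg_hom B (sharp C M rho (sharp C M rho c)) (sharp C M rho c) (mu M).
Proof.
  apply sharp_hom; [apply mu_iota | apply mu_mu |].
  intro t. rewrite <- eta_hom, mu_eta, <- fmap_comp, (fmap_ext _ _ (fun u => u) (@mu_eta _ M X)).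
  apply fmap_id.
Qed.

End Sharp.

Theorem mainTheorem9 (B : DCPOFunctor) (C : Cofree B) (S : Functor) (M : FreeMonad S)
  (rho : forall X, S (Binf C X) -> B (Sstar M X))
  (HB : preserves_weak_pullbacks B)
  (Hnat : biGSOS_natural C M rho)
  (Hmon : biGSOS_monotone C M rho) :
  (forall (X : Type) (c : X -> B X), coalg_hom B c (sharp C M rho c) (eta M)) /\
  (forall (X : Type) (c : X -> B X),
      coalg_hom B (sharp C M rho (sharp C M rho c)) (sharp C M rho c) (mu M)) /\
  lifted_monad B C M rho.
Proof.
  clear HB.
  pose proof (@eta_hom B C S M rho Hmon) as Heta.
  pose proof (@mu_hom B C S M rho Hmon Hnat) as Hmu.
  split; [exact Heta |]. split; [exact Hmu |].
  repeat split; intros.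
  - now apply Smap_hom.
  - apply Smap_id.
  - apply Smap_comp.
  - apply Heta.
  - apply Hmu.
  - apply Smap_eta.
  - apply Smap_mu.
  - apply mu_eta.
  - apply mu_Smap_eta.
  - apply mu_mu.
Qed.
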